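(* Let $L\neq0$ and write $\ell=(L^2)^{1/3}$. For $h<-\frac32\ell$ let $u_1\in(0,\ell)$ and $u_2\in(\ell,+\infty)$ be the unique numbers with $2u_i+\frac{L^2}{u_i^2}=-2h$, and define $C_{1,\xi}(h)$ and $C_{2,\xi}(h)$ by $$\Big(u_1+\frac{2L^2}{u_1^2}\Big)u_1=2(C_{1,\xi}(h)+1),\qquad \Big(u_2+\frac{2L^2}{u_2^2}\Big)u_2=2(C_{2,\xi}(h)+1);$$ at $h=-\frac32\ell$ set $C_{1,\xi}(h)=C_{2,\xi}(h)=\frac32\ell^2-1$ (the limiting value). Then for every $h\in(-\infty,-\frac32\ell]$ one has $C_{1,\xi}(h)\le C_{2,\xi}(h)$, with equality if and only if $h=-\frac32\ell$.
   Context: Equivalently, $C_{1,\xi}(h)$ (resp. $C_{2,\xi}(h)$) is the value of $c$ for which the cubic $f(u)=u^3+2hu^2+2(c+1)u-L^2$ has a double positive root smaller (resp. larger) than its simple root. *)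

From Stdlib Require Import Reals Lra ClassicalEpsilon.
Open Scope R_scope.

Definition ell (L : R) : R := Rpower (L ^ 2) (1 / 3).

Definition u1 (L h : R) : R :=
  epsilon (inhabits 0)
    (fun u => 0 < u < ell L /\ 2 * u + L ^ 2 / u ^ 2 = - 2 * h).

Definition u2 (L h : R) : R :=
  epsilon (inhabits 0)
    (fun u => ell L < u /\ 2 * u + L ^ 2 / u ^ 2 = - 2 * h).

Definition C_of (L u : R) : R := (u + 2 * L ^ 2 / u ^ 2) * u / 2 - 1.

(* For h < -3/2 ell use u_1 / u_2; otherwise (in particular at h = -3/2 ell)
   the limiting value 3/2 ell^2 - 1.  Values for h > -3/2 ell are irrelevant. *)
Definition C1xi (L h : R) : R :=
  if Rlt_dec h (- (3 / 2) * ell L) then C_of L (u1 L h)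
  else 3 / 2 * ell L ^ 2 - 1.

Definition C2xi (L h : R) : R :=
  if Rlt_dec h (- (3 / 2) * ell L) then C_of L (u2 L h)
  else 3 / 2 * ell L ^ 2 - 1.

From Stdlib Require Import Reals Lra ClassicalEpsilon.
Open Scope R_scope.

(* With k = -2h, the numbers u1 < u2 are positive roots of the cubic
   2u^3 - k u^2 + L^2; they exist by the intermediate value theorem, since
   the cubic is positive at 0 and at -h but negative at ell (as k > 3 ell
   and ell^3 = L^2).  Along this level set C_of L u = k u - 3/2 u^2 - 1.
   Subtracting the cubic at u1 and at u2 gives
   (u1 + u2) (2k - 3(u1 + u2)) = (u2 - u1)^2, hence
   C(u2) - C(u1) = (u2 - u1)^3 / (2 (u1 + u2)) > 0. *)

Lemma pow2_gt_0 (x : R) : x <> 0 -> 0 < x ^ 2.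
Proof. intros Hx; rewrite <- Rsqr_pow2; apply Rsqr_pos_lt, Hx. Qed.

Lemma ell_pos (L : R) : 0 < ell L.
Proof. unfold ell, Rpower; apply exp_pos. Qed.

Lemma ell_cube (L : R) : L <> 0 -> ell L ^ 3 = L ^ 2.
Proof.
  intros HL.
  assert (HL2 : 0 < L ^ 2) by (apply pow2_gt_0; exact HL).
  rewrite <- (Rpower_pow 3 (ell L)) by apply ell_pos.
  unfold ell; rewrite Rpower_mult; simpl INR.
  replace (1 / 3 * (1 + 1 + 1)) with 1 by field.
  apply Rpower_1; exact HL2.
Qed.

Definition level_cubic (L k u : R) : R := 2 * u ^ 3 - k * u ^ 2 + L ^ 2.

Lemma level_iff_cubic_root (L k u : R) :
  0 < u -> 2 * u + L ^ 2 / u ^ 2 = k <-> level_cubic L k u = 0.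
Proof.
  intros Hu; unfold level_cubic; split; intros E.
  - subst k; field; lra.
  - apply Rmult_eq_reg_r with (u ^ 2); [| apply pow_nonzero; lra].
    field_simplify; [nra | lra].
Qed.

Lemma C_of_on_level (L k u : R) :
  0 < u -> 2 * u + L ^ 2 / u ^ 2 = k -> C_of L u = k * u - 3 / 2 * u ^ 2 - 1.
Proof.
  intros Hu E.
  apply level_iff_cubic_root in E; [| exact Hu]; unfold level_cubic in E.
  unfold C_of; replace (L ^ 2) with (k * u ^ 2 - 2 * u ^ 3) by lra.
  field; lra.
Qed.

Lemma level_roots_gap (L k x y : R) :
  x <> y -> level_cubic L k x = 0 -> level_cubic L k y = 0 ->
  (x + y) * (2 * k - 3 * (x + y)) = (y - x) ^ 2.
Proof.
  unfold level_cubic; intros Hxy Ex Ey.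
  assert (Hsum : k * (x + y) = 2 * (x ^ 2 + x * y + y ^ 2)).
  { apply Rmult_eq_reg_r with (y - x); [nra | lra]. }
  nra.
Qed.

Lemma C_of_on_level_lt (L k x y : R) :
  0 < x < y ->
  2 * x + L ^ 2 / x ^ 2 = k -> 2 * y + L ^ 2 / y ^ 2 = k ->
  C_of L x < C_of L y.
Proof.
  intros Hxy Ex Ey.
  rewrite (C_of_on_level L k x), (C_of_on_level L k y) by lra.
  apply level_iff_cubic_root in Ex, Ey; try lra.
  pose proof (level_roots_gap L k x y ltac:(lra) Ex Ey) as Hgap.
  assert (Hfactor : 0 < 2 * k - 3 * (x + y)).
  { assert (0 < (y - x) ^ 2) by (apply pow2_gt_0; lra). nra. }
  nra.
Qed.

Lemma level_point_between (L k a b : R) :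
  0 <= a < b -> level_cubic L k a * level_cubic L k b < 0 ->
  exists u, a < u < b /\ 2 * u + L ^ 2 / u ^ 2 = k.
Proof.
  intros Hab Hsign.
  assert (Hcont : continuity (level_cubic L k)) by (unfold level_cubic; reg).
  destruct (IVT_cor _ a b Hcont ltac:(lra) ltac:(lra)) as [u [Hu Hroot]].
  assert (u <> a) by (intros ->; rewrite Hroot in Hsign; lra).
  assert (u <> b) by (intros ->; rewrite Hroot in Hsign; lra).
  exists u; split; [lra |].
  apply level_iff_cubic_root; [lra | exact Hroot].
Qed.

Lemma level_cubic_at_ell (L h : R) :
  L <> 0 -> h < - (3 / 2) * ell L -> level_cubic L (- 2 * h) (ell L) < 0.
Proof.
  intros HL Hh; unfold level_cubic; rewrite <- (ell_cube L HL).
  pose proof (ell_pos L).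
  assert (0 < ell L ^ 2) by (apply pow2_gt_0; lra).
  nra.
Qed.

Lemma u1_spec (L h : R) : L <> 0 -> h < - (3 / 2) * ell L ->
  0 < u1 L h < ell L /\ 2 * u1 L h + L ^ 2 / u1 L h ^ 2 = - 2 * h.
Proof.
  intros HL Hh; unfold u1; apply epsilon_spec.
  assert (H0 : 0 < level_cubic L (- 2 * h) 0).
  { unfold level_cubic; pose proof (pow2_gt_0 L HL); lra. }
  pose proof (level_cubic_at_ell L h HL Hh).
  destruct (level_point_between L (- 2 * h) 0 (ell L)) as [u Hu].
  - pose proof (ell_pos L); lra.
  - nra.
  - exists u; exact Hu.
Qed.

Lemma u2_spec (L h : R) : L <> 0 -> h < - (3 / 2) * ell L ->
  ell L < u2 L h /\ 2 * u2 L h + L ^ 2 / u2 L h ^ 2 = - 2 * h.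
Proof.
  intros HL Hh; unfold u2; apply epsilon_spec.
  assert (Hfar : 0 < level_cubic L (- 2 * h) (- h)).
  { unfold level_cubic; pose proof (pow2_gt_0 L HL); nra. }
  pose proof (level_cubic_at_ell L h HL Hh).
  pose proof (ell_pos L).
  destruct (level_point_between L (- 2 * h) (ell L) (- h)) as [u Hu].
  - lra.
  - nra.
  - exists u; split; [lra | apply Hu].
Qed.

Lemma C1xi_lt_C2xi (L h : R) :
  L <> 0 -> h < - (3 / 2) * ell L -> C1xi L h < C2xi L h.
Proof.
  intros HL Hh; unfold C1xi, C2xi.
  destruct (Rlt_dec h _) as [_ | Hge]; [| lra].
  destruct (u1_spec L h HL Hh) as [Hu1 E1].
  destruct (u2_spec L h HL Hh) as [Hu2 E2].
  apply C_of_on_level_lt with (- 2 * h); [lra | exact E1 | exact E2].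
Qed.

Theorem lemma5p1 (L h : R) :
  L <> 0 -> h <= - (3 / 2) * ell L ->
  C1xi L h <= C2xi L h /\ (C1xi L h = C2xi L h <-> h = - (3 / 2) * ell L).
Proof.
  intros HL Hh.
  destruct (Req_dec h (- (3 / 2) * ell L)) as [Hcrit | Hlt].
  - assert (C1xi L h = C2xi L h).
    { unfold C1xi, C2xi; destruct (Rlt_dec h _); [lra | reflexivity]. }
    split; [lra | tauto].
  - pose proof (C1xi_lt_C2xi L h HL ltac:(lra)).
    split; [lra | split; intros; lra].
Qed.
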